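(* For a $*$-ring $R$ the following are equivalent: (1) $R$ is a generalized Rickart $*$-ring; (2) $R$ is a generalized weakly Rickart $*$-ring with unity.
   Context: A $*$-ring is an associative ring $R$ with an involution $x\mapsto x^*$ (additive, $(xy)^*=y^*x^*$, $x^{**}=x$). A projection is an element $e$ with $e=e^*=e^2$. For $a\in R$, $r(a)=\{b\in R: ab=0\}$. $R$ is a generalized Rickart $*$-ring if for every $x\in R$ there exist a positive integer $n$ and a projection $g$ with $r(x^n)=gR$. A projection $e$ is a generalized right projection of $x$ if there exists $n\in\mathbb N$ with $x^ne=x^n$ and, for all $y\in R$, $x^ny=0$ implies $ey=0$. $R$ is a generalized weakly Rickart $*$-ring if every element of $R$ has a generalized right projection. *)

(* A *-ring need not have a unit, so we model it as an
   additive abelian group (zmodType) with an explicit associative,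
   biadditive multiplication and an involution. *)
From mathcomp Require Import all_boot all_algebra.
Set Implicit Arguments. Unset Strict Implicit. Unset Printing Implicit Defensive.
Import GRing.Theory.
Local Open Scope ring_scope.

Section StarRing.
Variables (R : zmodType) (mul : R -> R -> R) (star : R -> R).

Definition is_rng : Prop :=
  associative mul /\ left_distributive mul +%R /\ right_distributive mul +%R.

Definition is_star_ring : Prop :=
  is_rng /\
  (forall x y, star (x + y) = star x + star y) /\
  (forall x y, star (mul x y) = mul (star y) (star x)) /\
  (forall x, star (star x) = x).

Definition has_unity : Prop := exists u : R, forall x, mul u x = x /\ mul x u = x.

(* x ^ n for n >= 1 : rpow x 1 = x, rpow x (n+1) = rpow x n * x *)
Definition rpow (x : R) (n : nat) : R := iter n.-1 (fun y => mul y x) x.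

Definition projection (e : R) : Prop := e = star e /\ e = mul e e.

Definition rann (a : R) : R -> Prop := fun b => mul a b = 0.

Definition right_ideal_gen (g : R) : R -> Prop := fun b => exists r, b = mul g r.

Definition generalized_rickart : Prop :=
  forall x : R, exists n : nat, exists g : R,
    (0 < n)%N /\ projection g /\ (forall b, rann (rpow x n) b <-> right_ideal_gen g b).

Definition gen_right_projection (x e : R) : Prop :=
  projection e /\ exists n : nat, (0 < n)%N /\ mul (rpow x n) e = rpow x n /\
    (forall y, mul (rpow x n) y = 0 -> mul e y = 0).

Definition generalized_weakly_rickart : Prop :=
  forall x : R, exists e : R, gen_right_projection x e.

End StarRing.

(* For an idempotent e of a unital ring, [a e = a] together with
   [a y = 0 -> e y = 0] holds exactly when r(a) = (1 - e)R, and 1 - e is a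
   projection whenever e is; taking a = x^n exchanges the two definitions.
   Unity comes for free in a generalized Rickart *-ring: r(0^n) = R = gR makes
   the projection g a left identity, and the involution makes it a right one. *)
From mathcomp Require Import all_boot all_algebra.
Set Implicit Arguments. Unset Strict Implicit. Unset Printing Implicit Defensive.
Import GRing.Theory.
Local Open Scope ring_scope.

Section Rng.
Variables (R : zmodType) (mul : R -> R -> R).
Hypotheses (mulDl : left_distributive mul +%R) (mulDr : right_distributive mul +%R).

Lemma rng_mul0r x : mul 0 x = 0.
Proof. by apply: (@addrI _ (mul 0 x)); rewrite -mulDl !addr0. Qed.

Lemma rng_mulr0 x : mul x 0 = 0.
Proof. by apply: (@addrI _ (mul x 0)); rewrite -mulDr !addr0. Qed.

Lemma rng_mulBl x y z : mul (x - y) z = mul x z - mul y z.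
Proof. by apply: (canRL (addrK _)); rewrite -mulDl subrK. Qed.

Lemma rng_mulBr x y z : mul x (y - z) = mul x y - mul x z.
Proof. by apply: (canRL (addrK _)); rewrite -mulDr subrK. Qed.

Lemma rpow0 n : rpow mul 0 n = 0.
Proof. by rewrite /rpow; elim: n.-1 => //= k ->; rewrite rng_mulr0. Qed.

End Rng.

Section UnitalRng.
Variables (R : zmodType) (mul : R -> R -> R) (u : R).
Hypotheses (mulA : associative mul)
  (mulDl : left_distributive mul +%R) (mulDr : right_distributive mul +%R).
Hypothesis unity : forall x, mul u x = x /\ mul x u = x.

Let mul1r x : mul u x = x := proj1 (unity x).
Let mulr1 x : mul x u = x := proj2 (unity x).

Lemma right_projection_rannE a e : mul e e = e ->
  (mul a e = a /\ (forall y, mul a y = 0 -> mul e y = 0)) <->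
  (forall b, rann mul a b <-> right_ideal_gen mul (u - e) b).
Proof.
move=> e_idem; have e_compl0 r : mul e (mul (u - e) r) = 0.
  by rewrite mulA (rng_mulBr mulDr) mulr1 e_idem subrr (rng_mul0r mulDl).
split=> [[ae rann_e] b | rannE].
  split=> [ab0 | [r ->]].
    by exists b; rewrite (rng_mulBl mulDl) mul1r rann_e // subr0.
  by rewrite /rann mulA (rng_mulBr mulDr) mulr1 ae subrr (rng_mul0r mulDl).
have a_compl0 : mul a (u - e) = 0 by apply/rannE; exists u; rewrite mulr1.
split=> [|y /rannE [r ->] //].
by rewrite -[RHS]mulr1 -[u](subrK e) mulDr a_compl0 add0r.
Qed.

End UnitalRng.

Section StarRng.
Variables (R : zmodType) (mul : R -> R -> R) (star : R -> R).
Hypotheses (mulA : associative mul)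
  (mulDl : left_distributive mul +%R) (mulDr : right_distributive mul +%R).
Hypotheses (starD : forall x y, star (x + y) = star x + star y)
  (starM : forall x y, star (mul x y) = mul (star y) (star x))
  (starK : forall x, star (star x) = x).

Lemma starN x : star (- x) = - star x.
Proof.
apply: (@addrI _ (star x)); rewrite -starD !subrr.
by apply: (@addrI _ (star 0)); rewrite -starD !addr0.
Qed.

Lemma left_unit_projection_unity g :
  projection mul star g -> (forall b, mul g b = b) ->
  forall x, mul g x = x /\ mul x g = x.
Proof.
move=> [g_sym _] g_left x; split => //.
by rewrite -[x]starK -[in RHS](g_left (star x)) starM -g_sym.
Qed.

Lemma generalized_rickart_unity :
  generalized_rickart mul star -> has_unity mul.
Proof.
move=> GR; have [n [g [_ [g_proj rann0]]]] := GR 0.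
exists g; apply: left_unit_projection_unity => // b.
have [r ->] : right_ideal_gen mul g b.
  by apply/rann0; rewrite /rann (rpow0 mulDr) (rng_mul0r mulDl).
by rewrite mulA -(proj2 g_proj).
Qed.

Variable u : R.
Hypothesis unity : forall x, mul u x = x /\ mul x u = x.

Let mul1r x : mul u x = x := proj1 (unity x).
Let mulr1 x : mul x u = x := proj2 (unity x).

Lemma star1 : star u = u.
Proof. by have := starM (star u) u; rewrite starK mulr1 starK => /esym. Qed.

Lemma projection_compl e : projection mul star e -> projection mul star (u - e).
Proof.
move=> [e_sym e_idem]; split; first by rewrite starD starN star1 -e_sym.
by rewrite (rng_mulBl mulDl) !(rng_mulBr mulDr) !mul1r !mulr1 -e_idem subrr subr0.
Qed.

End StarRng.

Theorem mainTheorem8 (R : zmodType) (mul : R -> R -> R) (star : R -> R) :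
  is_star_ring mul star ->
  (generalized_rickart mul star <->
   generalized_weakly_rickart mul star /\ has_unity mul).
Proof.
move=> [[mulA [mulDl mulDr]] [starD [starM starK]]].
split=> [GR | [GWR [u unity]] x].
  have [u unity] := generalized_rickart_unity mulA mulDl mulDr starM starK GR.
  split=> [x|]; last by exists u.
  have [n [g [n_gt0 [g_proj rannE]]]] := GR x.
  have g'_proj : projection mul star (u - g) by exact: projection_compl.
  exists (u - g); split=> //; exists n; split=> //.
  apply/(right_projection_rannE mulA mulDl mulDr unity); first by case: g'_proj.
  by rewrite subKr.
have [e [e_proj [n [n_gt0 right_proj]]]] := GWR x.
have e_idem : mul e e = e by case: e_proj.
exists n, (u - e); split=> //; split; first exact: projection_compl.
exact/(right_projection_rannE mulA mulDl mulDr unity).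
Qed.
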